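(* Let $S,T,Q\ge1$ be integers. Consider a separable ARMA layer with moving-average kernel $W$ (for each pair $(t,s)$ a finitely supported real 2D filter $W_{t,s}$) and, for each output channel $t\in\{1,\dots,T\}$ and each $q\in\{1,\dots,Q\}$, length-3 real filters $f^{q}_{\cdot,t}=(f^{q}_{-1,t},f^{q}_{0,t},f^{q}_{1,t})$ and $g^{q}_{\cdot,t}=(g^{q}_{-1,t},g^{q}_{0,t},g^{q}_{1,t})$, whose input $X=(X_s)_{s=1}^S$ and output $Y=(Y_t)_{t=1}^T$ are related by $$\big(f^{1}_{\cdot,t}*\cdots*f^{Q}_{\cdot,t}\big)\otimes\big(g^{1}_{\cdot,t}*\cdots*g^{Q}_{\cdot,t}\big) * Y_t=\sum_{s=1}^{S}W_{t,s}*X_s\qquad(t=1,\dots,T).$$ If $$\big|f^{q}_{-1,t}+f^{q}_{1,t}\big|<f^{q}_{0,t}\quad\text{and}\quad \big|g^{q}_{-1,t}+g^{q}_{1,t}\big|<g^{q}_{0,t}\qquad\text{for all } q\in\{1,\dots,Q\},\ t\in\{1,\dots,T\},$$ then the layer is (BIBO) stable.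
   Context: Signals are real arrays indexed by $\mathbb{Z}^2$ (2D) or $\mathbb{Z}$ (1D); $*$ denotes convolution (1D filters convolved with each other give 1D filters), and for 1D filters $u,v$, $u\otimes v$ is the 2D filter $(u\otimes v)_{p_1,p_2}=u_{p_1}v_{p_2}$. A length-3 filter $f$ has entries $f_{-1},f_0,f_1$ at positions $-1,0,1$. A linear model $y=h*x$ is BIBO stable if for every input $x$ with $\sup_i|x_i|<\infty$ the output satisfies $\sup_i|y_i|<\infty$. The autoregressive relation $A_t*Y_t=Z_t$ (with $A_t$ the separable filter above and $Z_t=\sum_s W_{t,s}*X_s$) is realized as $Y_t=H_t*Z_t$ with $H_t$ a convolution inverse of $A_t$ ($H_t*A_t=\delta$); the layer is called stable if such inverses can be chosen so that the resulting map $X\mapsto Y$ sends bounded inputs to bounded outputs. *)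

From HB Require Import structures.
From mathcomp Require Import all_boot all_order all_algebra.
From mathcomp Require Import all_classical all_reals.
From mathcomp Require Import ereal esum.
Set Implicit Arguments. Unset Strict Implicit. Unset Printing Implicit Defensive.
Import Order.TTheory GRing.Theory Num.Theory.
Local Open Scope classical_set_scope.
Local Open Scope ring_scope.

Section Defs.
Variable R : realType.

Definition asummable (I : choiceType) (f : I -> R) : Prop :=
  summable [set: I] (fun k => (f k)%:E).

(* Sum of a real family (meaningful when the family is absolutely summable):
   sum of positive parts minus sum of negative parts. *)
Definition ssum (I : choiceType) (f : I -> R) : R :=
  fine (\esum_(k in [set: I]) (Num.max (f k) 0)%:E) -
  fine (\esum_(k in [set: I]) (Num.max (- f k) 0)%:E).

Definition conv1 (u v : int -> R) : int -> R :=
  fun p => ssum (fun k : int => u k * v (p - k)).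

Definition conv2 (h x : int * int -> R) : int * int -> R :=
  fun p => ssum (fun k : int * int => h k * x (p.1 - k.1, p.2 - k.2)).

Definition delta1 : int -> R := fun p => if p == 0 then 1 else 0.
Definition delta2 : int * int -> R :=
  fun p => if (p.1 == 0) && (p.2 == 0) then 1 else 0.

Definition iconv1 (us : seq (int -> R)) : int -> R := foldr conv1 delta1 us.

Definition tens (u v : int -> R) : int * int -> R := fun p => u p.1 * v p.2.

Definition bounded2 (x : int * int -> R) : Prop :=
  exists M : R, forall p, `|x p| <= M.

Definition length3 (u : int -> R) : Prop :=
  forall i : int, i \notin [:: -1; 0; 1] -> u i = 0.

Definition fin_supp2 (w : int * int -> R) : Prop :=
  finite_set [set p | w p != 0].

Definition ar_filter (Q Tn : nat) (f g : 'I_Q -> 'I_Tn -> int -> R) (t : 'I_Tn)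
  : int * int -> R :=
  tens (iconv1 [seq f q t | q <- enum 'I_Q]) (iconv1 [seq g q t | q <- enum 'I_Q]).

(* Stability of the layer A_t * Y_t = Z_t := sum_s W_{t,s} * X_s:
   convolution inverses H_t (H_t * A_t = delta) can be chosen so that
   Y_t := H_t * Z_t is well defined (absolutely convergent) and bounded
   for every bounded input X. *)
Definition arma_stable (Sn Tn : nat) (A : 'I_Tn -> int * int -> R)
  (W : 'I_Tn -> 'I_Sn -> int * int -> R) : Prop :=
  exists H : 'I_Tn -> int * int -> R,
    (forall t, conv2 (H t) (A t) = delta2) /\
    forall X : 'I_Sn -> int * int -> R,
      (forall s, bounded2 (X s)) ->
      forall t : 'I_Tn,
        let Z := fun p => \sum_(s < Sn) conv2 (W t s) (X s) p in
        (forall p : int * int,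
            asummable (fun k : int * int => H t k * Z (p.1 - k.1, p.2 - k.2)))
        /\ bounded2 (conv2 (H t) Z).

End Defs.

(* Each length-3 filter f with |f(-1) + f(1)| < f(0) factors as
   K (delta - al delta_(-1)) * (delta - ga delta_1) with K > 0 and |al|, |ga| < 1,
   so it has an absolutely summable convolution inverse: the two-sided geometric
   sequence equal to c ga^k for k >= 0 and c al^(-k) for k < 0.  Convolution of
   summable kernels is associative, so the product of the inverses inverts the
   product of the filters, and the tensor product of the inverses of the two 1D
   factors inverts the separable 2D filter A_t.  Finally a summable kernel maps
   bounded signals to bounded ones, |h * x| <= ||h||_1 sup |x|, and so does the
   finitely supported moving-average part, hence Y_t = H_t * Z_t is bounded. *)

From HB Require Import structures.
From mathcomp Require Import all_boot all_order all_algebra.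
From mathcomp Require Import all_classical all_reals.
From mathcomp Require Import ereal esum sequences normedtype numfun.
From mathcomp Require Import ring lra.
Import Order.TTheory GRing.Theory Num.Theory.
Set Implicit Arguments. Unset Strict Implicit. Unset Printing Implicit Defensive.
Local Open Scope ring_scope.

Section AbsoluteSum.
Variable R : realType.
Implicit Types I J : choiceType.

Definition esumT I (f : I -> R) : \bar R := \esum_(k in [set: I]) (f k)%:E.

Definition norm1 I (f : I -> R) : R := fine (esumT (fun k => `|f k|)).

Lemma asummableE I (f : I -> R) :
  asummable f = (esumT (fun k => `|f k|%R) < +oo)%E.
Proof. by []. Qed.

Lemma esumT_ge0 I (f : I -> R) : (forall k, 0 <= f k) -> (0 <= esumT f)%E.
Proof. by move=> f0; apply: esum_ge0 => k _; rewrite lee_fin. Qed.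

Lemma le_esumT I (f g : I -> R) :
  (forall k, f k <= g k) -> (esumT f <= esumT g)%E.
Proof. by move=> fg; apply: le_esum => k _; rewrite lee_fin. Qed.

Lemma esumT_fin_num I (f : I -> R) :
  (forall k, 0 <= f k) -> (esumT f < +oo)%E -> esumT f \is a fin_num.
Proof.
by move=> f0 fy; rewrite fin_numElt fy andbT (lt_le_trans (ltNyr 0)) ?esumT_ge0.
Qed.

Lemma esumT_finE I (f : I -> R) :
  (forall k, 0 <= f k) -> (esumT f < +oo)%E -> esumT f = (fine (esumT f))%:E.
Proof. by move=> f0 fy; rewrite fineK ?esumT_fin_num. Qed.

Lemma esumTD I (f g : I -> R) : (forall k, 0 <= f k) -> (forall k, 0 <= g k) ->
  esumT (fun k => f k + g k) = (esumT f + esumT g)%E.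
Proof. by move=> f0 g0; rewrite /esumT -esumD // => k _; rewrite lee_fin. Qed.

Lemma esumTZ I (c : R) (f : I -> R) : 0 <= c -> (forall k, 0 <= f k) ->
  esumT (fun k => c * f k) = (c%:E * esumT f)%E.
Proof.
move=> c0 f0; rewrite /esumT /esum -ereal_supZl //; last first.
  by apply/set0P; exists 0%E, set0 => //; rewrite fsbig_set0.
rewrite image_comp; congr ereal_sup; apply: eq_imagel => A _ /=.
by rewrite ge0_mule_fsumr // => k; rewrite lee_fin.
Qed.

Lemma esumT_ge I (f : I -> R) i :
  (forall k, 0 <= f k) -> ((f i)%:E <= esumT f)%E.
Proof.
move=> f0; rewrite /esumT (esumID [set i]); last by move=> k _; rewrite lee_fin.
by rewrite setTI esum_set1 ?lee_fin // leeDl // esum_ge0 // => k _; rewrite lee_fin.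
Qed.

Lemma esumT_reindex I J (e : I -> J) (f : J -> R) :
  bijective e -> esumT (fun k => f (e k)) = esumT f.
Proof.
by move=> be; rewrite /esumT (reindex_esum [set: I] [set: J] e) // setTT_bijective.
Qed.

Lemma esumT_pair I J (h : I * J -> R) : (forall k, 0 <= h k) ->
  esumT h = \esum_(i in [set: I]) esumT (fun j => h (i, j)).
Proof.
move=> h0; rewrite /esumT esum_esum; last by move=> i j _ _; rewrite lee_fin.
have -> : ([set: I] `*`` (fun=> [set: J]) = [set: I * J])%classic.
  by apply/seteqP; split => // -[].
by apply: eq_esum => -[].
Qed.

Lemma esumT_section_le I J (h : I * J -> R) i : (forall k, 0 <= h k) ->
  (esumT (fun j => h (i, j)) <= esumT h)%E.
Proof.
move=> h0; rewrite (esumT_pair h0) (esumID [set i]); last first.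
  by move=> k _; apply: esumT_ge0 => j.
rewrite setTI esum_set1 ?esumT_ge0 // leeDl //.
by apply: esum_ge0 => k _; apply: esumT_ge0 => j.
Qed.

Lemma esumT_fine_section I J (h : I * J -> R) : (forall k, 0 <= h k) ->
  (esumT h < +oo)%E -> esumT (fun i => fine (esumT (fun j => h (i, j)))) = esumT h.
Proof.
move=> h0 hy; rewrite (esumT_pair h0); apply: eq_esum => i _.
by rewrite -esumT_finE // (le_lt_trans (esumT_section_le i h0)).
Qed.

Lemma esumT_prod I J (a : I -> R) (b : J -> R) :
  (forall k, 0 <= a k) -> (forall k, 0 <= b k) -> (esumT b < +oo)%E ->
  esumT (fun k : I * J => a k.1 * b k.2) = (esumT a * esumT b)%E.
Proof.
move=> a0 b0 by_; rewrite esumT_pair /=; last by move=> k; rewrite mulr_ge0.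
rewrite [esumT b]esumT_finE // muleC -esumTZ ?fine_ge0 ?esumT_ge0 //.
by apply: eq_esum => i _; rewrite esumTZ // esumT_finE // -EFinM mulrC.
Qed.

Lemma esumT_delta I (j : I) (x : R) : 0 <= x ->
  esumT (fun k => if k == j then x else 0) = x%:E.
Proof.
move=> x0; rewrite /esumT (esumID [set j]); last first.
  by move=> k _; case: ifP; rewrite lee_fin.
rewrite setTI esum_set1 ?eqxx ?lee_fin // esum1 ?adde0 // => k [_ /= /eqP nk].
by rewrite (negPf nk).
Qed.

Lemma asummable_le I (f g : I -> R) :
  (forall k, `|f k| <= g k) -> (esumT g < +oo)%E -> asummable f.
Proof. by move=> fg; rewrite asummableE; apply: le_lt_trans; apply: le_esumT. Qed.

Lemma ler_norm1 I (f : I -> R) k : asummable f -> `|f k| <= norm1 f.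
Proof.
by move=> hf; rewrite -lee_fin /norm1 -esumT_finE //; apply: esumT_ge.
Qed.

Lemma asummableD I (f g : I -> R) :
  asummable f -> asummable g -> asummable (fun k => f k + g k).
Proof.
rewrite !asummableE => hf hg.
apply: (@asummable_le _ _ (fun k => `|f k| + `|g k|)) => [k|]; first exact: ler_normD.
by rewrite esumTD // lte_add_pinfty.
Qed.

Lemma asummableZ I (c : R) (f : I -> R) :
  asummable f -> asummable (fun k => c * f k).
Proof.
rewrite !asummableE => hf.
apply: (@asummable_le _ _ (fun k => `|c| * `|f k|)) => [k|]; first by rewrite normrM.
by rewrite esumTZ // lte_mul_pinfty.
Qed.

Lemma asummable_reindex I J (e : I -> J) (f : J -> R) :
  bijective e -> asummable f -> asummable (fun k => f (e k)).
Proof. by move=> be; rewrite !asummableE -(esumT_reindex _ be). Qed.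

Lemma asummable_section I J (h : I * J -> R) i :
  asummable h -> asummable (fun j => h (i, j)).
Proof.
by rewrite !asummableE; apply/le_lt_trans/(esumT_section_le i (h := fun k => `|h k|)).
Qed.

Lemma asummable_prod I J (a : I -> R) (b : J -> R) :
  asummable a -> asummable b -> asummable (fun k : I * J => a k.1 * b k.2).
Proof.
rewrite !asummableE => ha hb; under eq_fun do rewrite normrM.
rewrite (esumT_prod (a := fun k => `|a k|) (b := fun k => `|b k|)) //.
by apply: lte_mul_pinfty => //; [exact: esumT_ge0 | exact: esumT_fin_num].
Qed.

Lemma asummable_delta I (j : I) (g : I -> R) :
  asummable (fun k => if k == j then g k else 0).
Proof.
apply: (@asummable_le _ _ (fun k => if k == j then `|g j| else 0)).
  by move=> k; case: eqP => [->|]; rewrite ?normr0.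
by rewrite esumT_delta // ltry.
Qed.

Lemma asummable_fin_supp I (w : I -> R) :
  finite_set [set k | w k != 0]%classic -> asummable w.
Proof.
move=> hw; rewrite asummableE /esumT (esumID [set k | w k != 0]%classic); last first.
  by move=> k _; rewrite lee_fin.
rewrite setTI esum_fset // fsumEFin // esum1 ?adde0 ?ltry // => k [_ /=] /negP.
by rewrite negbK => /eqP ->; rewrite normr0.
Qed.

Lemma funrposBnegE (T : Type) (f : T -> R) k : f^\+ k - f^\- k = f k.
Proof. by move/(congr1 (@^~ k)): (funrposBneg f). Qed.

Lemma funrposDnegE (T : Type) (f : T -> R) k : f^\+ k + f^\- k = `|f k|.
Proof. by move/(congr1 (@^~ k)): (funrposDneg f). Qed.

Lemma esumT_funrpos_lty I (f : I -> R) : asummable f -> (esumT (f^\+)%R < +oo)%E.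
Proof.
rewrite asummableE; apply/le_lt_trans/le_esumT => k.
by rewrite -funrposDnegE lerDl funrneg_ge0.
Qed.

Lemma esumT_funrneg_lty I (f : I -> R) : asummable f -> (esumT (f^\-)%R < +oo)%E.
Proof.
rewrite asummableE; apply/le_lt_trans/le_esumT => k.
by rewrite -funrposDnegE lerDr funrpos_ge0.
Qed.

Lemma ssumE I (f : I -> R) : ssum f = fine (esumT f^\+) - fine (esumT f^\-).
Proof. by []. Qed.

Lemma ssum_split I (f a b : I -> R) :
  (forall k, 0 <= a k) -> (forall k, 0 <= b k) ->
  (esumT a < +oo)%E -> (esumT b < +oo)%E -> (forall k, f k = a k - b k) ->
  ssum f = fine (esumT a) - fine (esumT b).
Proof.
move=> a0 b0 ay by_ fE.
have fpa k : f^\+ k <= a k by rewrite /funrpos ge_max fE lerBlDr lerDl b0 a0.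
have fnb k : f^\- k <= b k by rewrite /funrneg ge_max fE opprB lerBlDr lerDl a0 b0.
have fin_p := esumT_fin_num (@funrpos_ge0 _ _ f) (le_lt_trans (le_esumT fpa) ay).
have fin_n := esumT_fin_num (@funrneg_ge0 _ _ f) (le_lt_trans (le_esumT fnb) by_).
have fin_a := esumT_fin_num a0 ay; have fin_b := esumT_fin_num b0 by_.
have : esumT (fun k => f^\+ k + b k) = esumT (fun k => f^\- k + a k).
  congr esumT; apply: funext => k.
  by have := funrposBnegE f k; rewrite fE; lra.
rewrite !esumTD ?funrpos_ge0 ?funrneg_ge0 // => /(congr1 fine).
rewrite !fineD // ssumE; lra.
Qed.

Lemma ssumD I (f g : I -> R) : asummable f -> asummable g ->
  ssum (fun k => f k + g k) = ssum f + ssum g.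
Proof.
move=> hf hg; have [fp fn] := (esumT_funrpos_lty hf, esumT_funrneg_lty hf).
have [gp gn] := (esumT_funrpos_lty hg, esumT_funrneg_lty hg).
rewrite (@ssum_split _ _ (fun k => f^\+ k + g^\+ k) (fun k => f^\- k + g^\- k)).
- rewrite !esumTD ?funrpos_ge0 ?funrneg_ge0 // !fineD ?esumT_fin_num //;
    try (by move=> k; rewrite ?funrpos_ge0 ?funrneg_ge0).
  rewrite !ssumE; lra.
- by move=> k; rewrite addr_ge0 ?funrpos_ge0.
- by move=> k; rewrite addr_ge0 ?funrneg_ge0.
- by rewrite esumTD ?funrpos_ge0 // lte_add_pinfty.
- by rewrite esumTD ?funrneg_ge0 // lte_add_pinfty.
- by move=> k; rewrite -(funrposBnegE f) -(funrposBnegE g); lra.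
Qed.

Lemma ssumN I (f : I -> R) : ssum (fun k => - f k) = - ssum f.
Proof. by rewrite !ssumE funrnegN funrposN opprB addrC. Qed.

Lemma ssumZ I (c : R) (f : I -> R) : asummable f ->
  ssum (fun k => c * f k) = c * ssum f.
Proof.
move=> hf; wlog c0 : c / 0 <= c => [hwlog|].
  have [/hwlog//|/ltW c0] := leP 0 c.
  rewrite -[c]opprK mulNr -(hwlog (- c)) ?oppr_ge0 // -ssumN.
  by congr ssum; apply: funext => k; rewrite mulNr.
have [fp fn] := (esumT_funrpos_lty hf, esumT_funrneg_lty hf).
rewrite (@ssum_split _ _ (fun k => c * f^\+ k) (fun k => c * f^\- k)).
- rewrite !esumTZ ?funrpos_ge0 ?funrneg_ge0 // !fineM ?esumT_fin_num //;
    try (by move=> k; rewrite ?funrpos_ge0 ?funrneg_ge0).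
  by rewrite ssumE /=; ring.
- by move=> k; rewrite mulr_ge0 ?funrpos_ge0.
- by move=> k; rewrite mulr_ge0 ?funrneg_ge0.
- by rewrite esumTZ ?funrpos_ge0 // lte_mul_pinfty.
- by rewrite esumTZ ?funrneg_ge0 // lte_mul_pinfty.
- by move=> k; rewrite -mulrBr funrposBnegE.
Qed.

Lemma norm_ssum_le I (f : I -> R) : asummable f -> `|ssum f| <= norm1 f.
Proof.
move=> hf; have [fp fn] := (esumT_funrpos_lty hf, esumT_funrneg_lty hf).
have -> : norm1 f = fine (esumT f^\+) + fine (esumT f^\-).
  rewrite /norm1 -fineD ?esumT_fin_num ?funrpos_ge0 ?funrneg_ge0 -?esumTD //;
    try (by move=> k; rewrite ?funrpos_ge0 ?funrneg_ge0).
  by congr (fine (esumT _)); apply: funext => k; rewrite funrposDnegE.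
have := fine_ge0 (esumT_ge0 (@funrpos_ge0 _ _ f)).
have := fine_ge0 (esumT_ge0 (@funrneg_ge0 _ _ f)).
by rewrite ssumE ler_norml => ? ?; apply/andP; split; lra.
Qed.

Lemma ssum_delta I (j : I) (g : I -> R) :
  ssum (fun k => if k == j then g k else 0) = g j.
Proof.
have -> : (fun k => if k == j then g k else 0) = (fun k => if k == j then g j else 0).
  by apply: funext => k; case: eqP => [->|].
rewrite (@ssum_split _ _ (fun k => if k == j then g^\+ j else 0)
                         (fun k => if k == j then g^\- j else 0)).
- by rewrite !esumT_delta ?funrpos_ge0 ?funrneg_ge0 //= funrposBnegE.
- by move=> k; case: ifP; rewrite ?funrpos_ge0.
- by move=> k; case: ifP; rewrite ?funrneg_ge0.
- by rewrite esumT_delta ?funrpos_ge0 ?ltry.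
- by rewrite esumT_delta ?funrneg_ge0 ?ltry.
- by move=> k; case: ifP; rewrite ?subrr ?funrposBnegE.
Qed.

Lemma ssum_reindex I J (e : I -> J) (f : J -> R) :
  bijective e -> ssum (fun k => f (e k)) = ssum f.
Proof. by move=> be; rewrite !ssumE -(esumT_reindex f^\+ be) -(esumT_reindex f^\- be). Qed.

Lemma ssum_pair I J (h : I * J -> R) : asummable h ->
  ssum h = ssum (fun i => ssum (fun j => h (i, j))).
Proof.
move=> hh; have [hp hn] := (esumT_funrpos_lty hh, esumT_funrneg_lty hh).
have [hp0 hn0] := (@funrpos_ge0 _ _ h, @funrneg_ge0 _ _ h).
rewrite [RHS](@ssum_split _ _ (fun i => fine (esumT (fun j => h^\+ (i, j))))
                             (fun i => fine (esumT (fun j => h^\- (i, j))))) //.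
- by rewrite !esumT_fine_section.
- by move=> i; apply/fine_ge0/esumT_ge0.
- by move=> i; apply/fine_ge0/esumT_ge0.
- by rewrite esumT_fine_section.
- by rewrite esumT_fine_section.
Qed.

Lemma swap_bij I J : bijective (fun k : J * I => (k.2, k.1)).
Proof. by exists (fun k : I * J => (k.2, k.1)) => -[]. Qed.

Lemma ssum_prod I J (a : I -> R) (b : J -> R) : asummable a -> asummable b ->
  ssum (fun k : I * J => a k.1 * b k.2) = ssum a * ssum b.
Proof.
move=> ha hb; rewrite ssum_pair /=; last exact: asummable_prod.
rewrite [RHS]mulrC -ssumZ //.
by congr ssum; apply: funext => i; rewrite ssumZ // mulrC.
Qed.

Lemma asummableM_bounded I (a c : I -> R) (M : R) :
  asummable a -> (forall k, `|c k| <= M) -> asummable (fun k => a k * c k).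
Proof.
move=> ha hc; apply: (asummable_le (g := fun k => `|M| * `|a k|)).
  by move=> k; rewrite normrM mulrC ler_wpM2r // (le_trans (hc k) (ler_norm M)).
by rewrite esumTZ // lte_mul_pinfty.
Qed.

Lemma norm_ssumM_le I (a c : I -> R) (M : R) : 0 <= M ->
  asummable a -> (forall k, `|c k| <= M) ->
  `|ssum (fun k => a k * c k)| <= M * norm1 a.
Proof.
move=> M0 ha hc; have hac := asummableM_bounded ha hc.
apply: le_trans (norm_ssum_le hac) _.
have hMa : (esumT (fun k => M * `|a k|)%R < +oo)%E by rewrite esumTZ // lte_mul_pinfty.
have -> : M * norm1 a = fine (esumT (fun k => M * `|a k|)%R).
  by rewrite esumTZ // fineM // esumT_fin_num.
apply: fine_le; rewrite ?inE ?esumT_fin_num //; first by move=> k; rewrite mulr_ge0.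
by apply: le_esumT => k; rewrite normrM mulrC ler_wpM2r.
Qed.

Lemma ssum0 I : ssum (fun _ : I => 0 : R) = 0.
Proof.
by rewrite ssumE /esumT !esum1 ?subrr // => k _; rewrite /funrpos /funrneg ?oppr0 maxxx.
Qed.

Lemma asummable_seq_supp I (s : seq I) (f : I -> R) :
  (forall k, k \notin s -> f k = 0) -> asummable f.
Proof.
move=> fs; apply: asummable_fin_supp; apply: sub_finite_set (finite_seq s) => k /=.
by apply: contraR => /fs ->.
Qed.

Lemma ssum_seq_supp I (s : seq I) (f : I -> R) :
  uniq s -> (forall k, k \notin s -> f k = 0) -> ssum f = \sum_(k <- s) f k.
Proof.
elim: s f => [|x s IH] f /=.
  move=> _ f0; rewrite big_nil -(ssum0 I); congr ssum; apply: funext => k; exact: f0.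
case/andP=> xs us fs.
pose g k := if k == x then 0 else f k.
have gs k : k \notin s -> g k = 0.
  by rewrite /g; case: eqP => // /eqP kx ks; rewrite fs // inE negb_or kx.
have fE : f = fun k => (if k == x then f k else 0) + g k.
  by apply: funext => k; rewrite /g; case: ifP; rewrite ?addr0 ?add0r.
rewrite {1}fE ssumD; [|exact: asummable_delta|exact: asummable_seq_supp gs].
rewrite ssum_delta (IH g) // big_cons; congr (_ + _); apply: eq_big_seq => k ks.
by rewrite /g; case: eqP => // kx; move: xs; rewrite -kx ks.
Qed.

End AbsoluteSum.

Section Convolution.
Variable R : realType.
Implicit Types a b c : int -> R.

Lemma subr_bij (k : int) : bijective (fun n : int => n - k).
Proof. by exists (fun n => n + k) => n; rewrite ?addrK ?subrK. Qed.

Lemma conv1C a b : conv1 a b = conv1 b a.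
Proof.
apply: funext => p; rewrite /conv1.
rewrite -(ssum_reindex (fun k => b k * a (p - k)) (inv_bij (subKr p))).
by congr ssum; apply: funext => k; rewrite subKr mulrC.
Qed.

Lemma conv1_deltal a : conv1 (delta1 R) a = a.
Proof.
apply: funext => p; have := ssum_delta 0 (fun k => a (p - k)); rewrite subr0 => <-.
by congr ssum; apply: funext => k; rewrite /delta1; case: ifP; rewrite ?mul1r ?mul0r.
Qed.

Lemma asummable_delta1 : asummable (delta1 R).
Proof. exact: (asummable_delta 0 (fun=> 1)). Qed.

Lemma shear_bij : bijective (fun q : int * int => (q.2, q.1 - q.2)).
Proof.
exists (fun q : int * int => (q.1 + q.2, q.1)) => -[x y] /=.
  by rewrite addrC subrK.
by rewrite addrC addKr.
Qed.

Lemma asummable_conv_kernel a b : asummable a -> asummable b ->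
  asummable (fun q : int * int => a q.2 * b (q.1 - q.2)).
Proof.
move=> ha hb.
exact: (asummable_reindex (f := fun q : int * int => a q.1 * b q.2) shear_bij (asummable_prod ha hb)).
Qed.

Lemma asummable_conv1 a b : asummable a -> asummable b -> asummable (conv1 a b).
Proof.
move=> ha hb; have hab := asummable_conv_kernel ha hb.
apply: (asummable_le (g := fun p => norm1 (fun k => a k * b (p - k)))).
  by move=> p; apply: norm_ssum_le; exact: asummable_section p hab.
by rewrite /norm1 (esumT_fine_section (h := fun q : int * int => `|a q.2 * b (q.1 - q.2)|)).
Qed.

Lemma conv1A a b c (M : R) : asummable a -> asummable b ->
  (forall k, `|c k| <= M) -> conv1 (conv1 a b) c = conv1 a (conv1 b c).
Proof.
move=> ha hb hc; apply: funext => p; have hab := asummable_conv_kernel ha hb.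
(* Both sides sum h over (m, k), in the two possible orders. *)
pose h q := a q.2 * b (q.1 - q.2) * c (p - q.1).
have hh : asummable h by apply: asummableM_bounded hab _ => q; exact: hc.
have outer m : conv1 a b m * c (p - m) = ssum (fun k => h (m, k)).
  rewrite mulrC -ssumZ; last exact: asummable_section m hab.
  by congr ssum; apply: funext => k; rewrite /h /= mulrC.
have inner k : ssum (fun m => h (m, k)) = a k * conv1 b c (p - k).
  rewrite /conv1 -ssumZ; last by apply: asummableM_bounded hb _ => n; exact: hc.
  rewrite -[RHS](ssum_reindex _ (subr_bij k)).
  by congr ssum; apply: funext => m; rewrite /h /= -mulrA; congr (_ * (_ * c _)); ring.
rewrite {1}/conv1 (_ : (fun m => _) = fun m => ssum (fun k => h (m, k))); last first.
  exact: funext.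
rewrite -ssum_pair // -(ssum_reindex h (swap_bij _ _)) ssum_pair /=.
  by congr ssum; apply: funext => k; rewrite inner.
exact: asummable_reindex (swap_bij _ _) hh.
Qed.

End Convolution.

Section Inverse.
Variable R : realType.
Implicit Types v w a b : int -> R.

Definition l1_inverse v a : Prop :=
  [/\ asummable a, asummable v & conv1 v a = delta1 R].

Lemma l1_inverse_delta1 : l1_inverse (delta1 R) (delta1 R).
Proof. by split; rewrite ?conv1_deltal //; exact: asummable_delta1. Qed.

Lemma l1_inverse_conv1 v a w b : l1_inverse v a -> l1_inverse w b ->
  l1_inverse (conv1 v w) (conv1 a b).
Proof.
move=> [ha hv hva] [hb hw hwb]; split; try exact: asummable_conv1.
have hwab : conv1 w (conv1 a b) = a.
  by rewrite [conv1 a b]conv1C -(conv1A hw hb (fun k => ler_norm1 k ha)) hwb conv1_deltal.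
by rewrite (conv1A hv hw (fun k => ler_norm1 k (asummable_conv1 ha hb))) hwab.
Qed.

Lemma l1_inverse_iconv1 (T : Type) (s : seq T) (v a : T -> int -> R) :
  (forall q, l1_inverse (v q) (a q)) ->
  l1_inverse (iconv1 [seq v q | q <- s]) (iconv1 [seq a q | q <- s]).
Proof.
move=> hva; elim: s => [|q s IH]; first exact: l1_inverse_delta1.
exact: l1_inverse_conv1.
Qed.

End Inverse.

Section Geometric.
Variable R : realType.

Lemma geometric_sum_le (r : R) n : 0 <= r < 1 -> \sum_(0 <= k < n) r ^+ k <= (1 - r)^-1.
Proof.
case/andP => r0 r1; have r1' : 0 < 1 - r by rewrite subr_gt0.
have e : (1 - r) * \sum_(0 <= k < n) r ^+ k = 1 - r ^+ n.
  elim: n => [|n IH]; first by rewrite big_geq // mulr0 expr0 subrr.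
  by rewrite big_nat_recr //= mulrDr IH exprS; ring.
by rewrite -(ler_pM2l r1') e mulfV ?gt_eqF // lerBlDr lerDl exprn_ge0.
Qed.

Lemma esum_geometric_lty (r : R) : 0 <= r < 1 ->
  (\esum_(n in [set: nat]) (r ^+ n)%:E < +oo)%E.
Proof.
move=> /[dup] r01 /andP[r0 _].
rewrite -nneseries_esumT; last by move=> n; rewrite lee_fin exprn_ge0.
apply: (@le_lt_trans _ _ ((1 - r)^-1)%:E); last exact: ltry.
apply: lime_le; first by apply: is_cvg_nneseries => n _ _; rewrite lee_fin exprn_ge0.
by apply: nearW => n; rewrite sumEFin lee_fin geometric_sum_le.
Qed.

Lemma asummable_geometric (r : R) : 0 <= r < 1 ->
  asummable (fun k : int => r ^+ `|k|%N).
Proof.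
move=> /[dup] r01 /andP[r0 r1]; rewrite asummableE.
under eq_fun do rewrite ger0_norm ?exprn_ge0 //.
rewrite /esumT (esumID [set k : int | 0 <= k]); last by move=> k _; rewrite lee_fin exprn_ge0.
have -> : ([set: int] `&` [set k : int | 0 <= k] = Posz @` [set: nat])%classic.
  apply/seteqP; split => [k /= [_ k0]|k /= [n _ <-]] //.
  by exists `|k|%N => //; rewrite gez0_abs.
have -> : ([set: int] `&` ~` [set k : int | 0 <= k] = Negz @` [set: nat])%classic.
  apply/seteqP; split => [k /= [_ k0]|k /= [n _ <-]] //.
  by case: k k0 => // n _; exists n.
rewrite !esum_image; [|by move=> x y _ _ []|by move=> x y _ _ [->]].
apply: lte_add_pinfty; first exact: esum_geometric_lty.
apply: le_lt_trans (esum_geometric_lty r01); apply: le_esum => n _.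
by rewrite lee_fin /= exprS ler_piMl // ?exprn_ge0 // ltW.
Qed.

End Geometric.

Section Length3.
Variable R : realType.
Implicit Types u v : int -> R.

Lemma asummable_length3 u : length3 u -> asummable u.
Proof. exact: asummable_seq_supp. Qed.

Lemma conv1_length3 u v p : length3 u ->
  conv1 u v p = u (-1) * v (p + 1) + u 0 * v p + u 1 * v (p - 1).
Proof.
move=> h3; rewrite /conv1 (ssum_seq_supp (s := [:: -1; 0; 1])) //.
  by rewrite !big_cons big_nil opprK !addr0 !addrA.
by move=> k /h3 ->; rewrite mul0r.
Qed.

Lemma normr_lt_root (fm f0 fp s : R) : `|fm + fp| < f0 -> 0 <= s ->
  s ^+ 2 = f0 ^+ 2 - 4 * fm * fp -> `|fp| < (f0 + s) / 2.
Proof.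
rewrite ltr_norml => /andP[h1 h2] s0 hs.
have [x0|x0] := leP 0 (2 * `|fp| - f0); last lra.
suff : (2 * `|fp| - f0) ^+ 2 < s ^+ 2 by nra.
rewrite hs; have [fp0|fp0] := leP 0 fp.
  by rewrite ger0_norm in x0 *; nra.
by rewrite ltr0_norm in x0 *; nra.
Qed.

Lemma length3_coef_factor (fm f0 fp : R) : `|fm + fp| < f0 ->
  exists K al ga : R, [/\ 0 < K, `|al| < 1, `|ga| < 1 &
    [/\ fm = - (K * al), fp = - (K * ga) & f0 = K * (1 + al * ga)]].
Proof.
move=> h; have f00 : 0 < f0 by apply: le_lt_trans h.
pose D := f0 ^+ 2 - 4 * fm * fp.
have D0 : 0 <= D.
  move: h; rewrite ltr_norml => /andP[h1 h2].
  have : 0 < (f0 - (fm + fp)) * (f0 + (fm + fp)) by apply: mulr_gt0; lra.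
  have := sqr_ge0 (fm - fp); rewrite /D; nra.
pose s := Num.sqrt D; have s0 : 0 <= s := sqrtr_ge0 D.
have hs : s ^+ 2 = D := sqr_sqrtr D0.
(* K is the larger root of K^2 - f0 K + fm fp = 0. *)
pose K := (f0 + s) / 2; have K0 : 0 < K by rewrite /K; lra.
have hp : `|fp| < K := normr_lt_root h s0 hs.
have hm : `|fm| < K.
  by apply: (normr_lt_root (fp := fm) (fm := fp)); rewrite 1?addrC // hs /D; ring.
have KK : K ^+ 2 - f0 * K + fm * fp = 0.
  have : 4 * (K ^+ 2 - f0 * K + fm * fp) = s ^+ 2 - D by rewrite /K /D; field.
  by rewrite hs subrr => /eqP; rewrite mulf_eq0 pnatr_eq0 => /eqP.
have Kn : K != 0 by rewrite gt_eqF.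
exists K, (- fm / K), (- fp / K); split.
- exact: K0.
- by rewrite normrM normrN normfV (gtr0_norm K0) ltr_pdivrMr // mul1r.
- by rewrite normrM normrN normfV (gtr0_norm K0) ltr_pdivrMr // mul1r.
split; [by field | by field |].
have -> : K * (1 + - fm / K * (- fp / K)) = (K ^+ 2 + fm * fp) / K by field.
by rewrite (_ : K ^+ 2 + fm * fp = f0 * K) ?mulfK //; lra.
Qed.

Definition geometric2 (c al ga : R) (k : int) : R :=
  if 0 <= k then c * ga ^+ `|k|%N else c * al ^+ `|k|%N.

Lemma asummable_geometric2 (c al ga : R) : `|al| < 1 -> `|ga| < 1 ->
  asummable (geometric2 c al ga).
Proof.
move=> hal hga; pose g k := `|c| * (`|al| ^+ `|k|%N + `|ga| ^+ `|k|%N).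
have hg : asummable g.
  by apply/asummableZ/asummableD; apply: asummable_geometric; rewrite normr_ge0.
apply: (asummable_le (g := fun k => `|g k|)); last exact: hg.
move=> k; rewrite /g [leRHS]ger0_norm ?mulr_ge0 ?addr_ge0 ?exprn_ge0 //.
rewrite /geometric2; case: ifP => _; rewrite normrM normrX ler_wpM2l //.
  by rewrite lerDr exprn_ge0.
by rewrite lerDl exprn_ge0.
Qed.

Lemma conv1_length3_geometric2 u (K al ga : R) : length3 u ->
  K != 0 -> al * ga != 1 ->
  u (-1) = - (K * al) -> u 1 = - (K * ga) -> u 0 = K * (1 + al * ga) ->
  conv1 u (geometric2 (K * (1 - al * ga))^-1 al ga) = delta1 R.
Proof.
move=> h3 Kn hag em ep e0; apply: funext => p.
have hag' : 1 - al * ga != 0 by rewrite subr_eq0 eq_sym.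
set c := _^-1; set w := geometric2 c al ga.
have wP (n : nat) : w n = c * ga ^+ n by [].
have wN (n : nat) : w (- n%:Z) = c * al ^+ n.
  by case: n => [|n]; rewrite /w /geometric2 /= ?expr0 // oppr_ge0 lez_nat.
rewrite conv1_length3 // em ep e0.
case: p => [[|m]|n].
- rewrite add0r sub0r (wP 1%N) (wN 1%N) (wP 0%N) /delta1 /= !expr1 !expr0 /c.
  by field; rewrite Kn hag'.
- have -> : m.+1%:Z + 1 = m.+2%:Z by rewrite -PoszD addn1.
  have -> : m.+1%:Z - 1 = m%:Z by rewrite -addn1 PoszD addrK.
  by rewrite !wP /delta1 /= !exprS; ring.
- rewrite NegzE.
  have -> : - n.+1%:Z + 1 = - n%:Z by rewrite -addn1 PoszD opprD addrNK.
  have -> : - n.+1%:Z - 1 = - n.+2%:Z by rewrite -opprD -PoszD addn1.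
  by rewrite !wN /delta1 /= !exprS; ring.
Qed.

Lemma length3_l1_inverse u : length3 u -> `|u (-1) + u 1| < u 0 ->
  exists v, l1_inverse v u.
Proof.
move=> h3 hu; have [K [al [ga [K0 hal hga [em ep e0]]]]] := length3_coef_factor hu.
have hag : al * ga != 1.
  have : `|al * ga| < 1 by rewrite normrM; have := normr_ge0 al; have := normr_ge0 ga; nra.
  by rewrite ltr_norml => /andP[_ h]; rewrite lt_eqF.
exists (geometric2 (K * (1 - al * ga))^-1 al ga); split.
- exact: asummable_length3.
- exact: asummable_geometric2.
- by rewrite conv1C (conv1_length3_geometric2 h3) // gt_eqF.
Qed.

End Length3.

Section Separable.
Variable R : realType.
Implicit Types (u v w a b : int -> R) (h x : int * int -> R).

Lemma delta2_tens : delta2 R = tens (delta1 R) (delta1 R).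
Proof.
apply: funext => -[i j]; rewrite /delta2 /tens /delta1 /=.
by case: (i == 0); rewrite ?mul1r ?mul0r.
Qed.

Lemma conv2_tens u v a b : asummable u -> asummable v -> asummable a -> asummable b ->
  conv2 (tens u v) (tens a b) = tens (conv1 u a) (conv1 v b).
Proof.
move=> hu hv ha hb; apply: funext => p; rewrite /conv2 /tens /conv1 -ssum_prod.
- by congr ssum; apply: funext => k /=; rewrite mulrACA.
- exact: (asummableM_bounded (c := fun k => a (p.1 - k)) hu (fun k => ler_norm1 _ ha)).
- exact: (asummableM_bounded (c := fun k => b (p.2 - k)) hv (fun k => ler_norm1 _ hb)).
Qed.

Lemma l1_inverse_tens v a w b : l1_inverse v a -> l1_inverse w b ->
  conv2 (tens v w) (tens a b) = delta2 R.
Proof. by move=> [ha hv hva] [hb hw hwb]; rewrite conv2_tens // hva hwb delta2_tens. Qed.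

Lemma asummable_conv2_term h x p : asummable h -> bounded2 x ->
  asummable (fun k => h k * x (p.1 - k.1, p.2 - k.2)).
Proof. by move=> hh [M hM]; apply: asummableM_bounded hh _ => k; exact: hM. Qed.

Lemma bounded2_conv2 h x : asummable h -> bounded2 x -> bounded2 (conv2 h x).
Proof.
move=> hh [M hM]; exists (M * norm1 h) => p.
exact: norm_ssumM_le (le_trans (normr_ge0 _) (hM 0)) hh (fun k => hM _).
Qed.

Lemma bounded2_sum n (x : 'I_n -> int * int -> R) :
  (forall s, bounded2 (x s)) -> bounded2 (fun p => \sum_(s < n) x s p).
Proof.
move=> hx; have [M hM] := choice hx; exists (\sum_(s < n) M s) => p.
by apply: le_trans (ler_norm_sum _ _ _) _; apply: ler_sum => s _.
Qed.

End Separable.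

Theorem theorem3 (R : realType) (Sn Tn Q : nat)
  (hS : (0 < Sn)%N) (hT : (0 < Tn)%N) (hQ : (0 < Q)%N)
  (W : 'I_Tn -> 'I_Sn -> int * int -> R)
  (f g : 'I_Q -> 'I_Tn -> int -> R)
  (hW : forall t s, fin_supp2 (W t s))
  (hf3 : forall q t, length3 (f q t))
  (hg3 : forall q t, length3 (g q t))
  (hf : forall q t, `|f q t (-1) + f q t 1| < f q t 0)
  (hg : forall q t, `|g q t (-1) + g q t 1| < g q t 0) :
  arma_stable (ar_filter f g) W.
Proof.
(* hS, hT and hQ are not needed: empty index sets are harmless. *)
have [vf hvf] := choice (fun qt => length3_l1_inverse (hf3 qt.1 qt.2) (hf qt.1 qt.2)).
have [vg hvg] := choice (fun qt => length3_l1_inverse (hg3 qt.1 qt.2) (hg qt.1 qt.2)).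
pose U t := iconv1 [seq vf (q, t) | q <- enum 'I_Q].
pose V t := iconv1 [seq vg (q, t) | q <- enum 'I_Q].
have hU t : l1_inverse (U t) (iconv1 [seq f q t | q <- enum 'I_Q]).
  by apply: l1_inverse_iconv1 => q; exact: hvf (q, t).
have hV t : l1_inverse (V t) (iconv1 [seq g q t | q <- enum 'I_Q]).
  by apply: l1_inverse_iconv1 => q; exact: hvg (q, t).
exists (fun t => tens (U t) (V t)); split => [t|X hX t Z].
  exact: l1_inverse_tens.
have [[_ hUt _] [_ hVt _]] := (hU t, hV t).
have hH : asummable (tens (U t) (V t)) := asummable_prod hUt hVt.
have hZ : bounded2 Z.
  by apply: bounded2_sum => s; exact: bounded2_conv2 (asummable_fin_supp (hW t s)) (hX s).
by split => [p|]; [exact: asummable_conv2_term hH hZ | exact: bounded2_conv2 hH hZ].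
Qed.
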